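(* Let $\mathcal Y\subset\mathbb R^d$ be a finite set such that no element of $\mathcal Y$ is a strict convex combination of other elements of $\mathcal Y$, let $\kappa>0$, let $\xi_1,\dots,\xi_N$ be noise samples and $c:\mathcal Y\times\Xi\to\mathbb R$ a cost, and set $\gamma_i=(c(y,\xi_i))_{y\in\mathcal Y}\in\mathbb R^{\mathcal Y}$. Let $\Omega_\Delta$ be a proper lower-semicontinuous convex function on $\mathbb R^{\mathcal Y}$ with domain $\Delta^{\mathcal Y}$ whose restriction to the affine hull $H_\Delta$ of $\Delta^{\mathcal Y}$ is Legendre-type, and suppose $\Omega_\Delta=\Psi_\Delta+\mathbb I_{\Delta^{\mathcal Y}}$ with $\Psi_\Delta$ a Legendre-type function. Assume that the Jensen gap of $\Psi_\Delta$, $$q_\otimes=(q_1,\dots,q_N)\mapsto \frac1N\sum_{i=1}^N\Psi_\Delta(q_i)-\Psi_\Delta\Big(\frac1N\sum_{i=1}^N q_i\Big),$$ is convex on $\Delta_\otimes=(\Delta^{\mathcal Y})^N$. Consider the alternating scheme: choose $\bar s^{(0)}_\otimes\in\bar S_\otimes$, and for $t\ge0$ let $$q_\otimes^{(t+1)}=\operatorname*{argmin}_{q_\otimes\in\Delta_\otimes}\mathcal S_{N}(\bar s_\otimes^{(t)},q_\otimes),\qquad \bar s_\otimes^{(t+1)}\in\operatorname*{argmin}_{s_\otimes\in\bar S_\otimes}\mathcal S_{N}(s_\otimes,q_\otimes^{(t+1)}).$$ Then the iterates converge in value to the global minimum of $\mathcal S_N$ over $\bar S_\otimes\times\Delta_\otimes$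 with rate $\mathcal O(1/t)$, i.e. $\mathcal S_N(\bar s_\otimes^{(t)},q_\otimes^{(t)})-\inf_{\bar S_\otimes\times\Delta_\otimes}\mathcal S_N=\mathcal O(1/t)$.
   Context: $\Delta^{\mathcal Y}=\{q\in\mathbb R^{\mathcal Y}:q\ge0,\ \sum_y q_y=1\}$; $\mathbb I_A$ is the indicator function of $A$ (0 on $A$, $+\infty$ elsewhere). A function $\Psi:\mathbb R^m\to\mathbb R\cup\{+\infty\}$ is Legendre-type if it is strictly convex on $\operatorname{int}(\operatorname{dom}\Psi)$ and essentially smooth: $\operatorname{int}(\operatorname{dom}\Psi)\neq\emptyset$, $\Psi$ is differentiable on it, and $\|\nabla\Psi(\mu)\|\to+\infty$ as $\mu$ tends to the boundary of $\operatorname{dom}\Psi$; for the restriction to an affine subspace $H$ this is understood with respect to the induced metric of $H$. The Fenchel–Young loss is $\mathcal L_{\Omega_\Delta}(s;q)=\Omega_\Delta(q)+\Omega_\Delta^*(s)-\langle s|q\rangle$, with $\Omega_\Delta^*(s)=\sup_q\langle s|q\rangle-\Omega_\Delta(q)$. Define $S(s,q;\xi_i)=\langle\gamma_i|q\rangle+\kappa\mathcal L_{\Omega_\Delta}(s;q)$, $\bar S_\otimes=\{(s_1,\dots,s_N)\in(\mathbb R^{\mathcal Y})^N: s_1=\dots=s_N\}$, and $\mathcal S_N(s_\otimes,q_\otimes)=\frac1N\sum_{i=1}^N S(s_i,q_i;\xi_i)$. *)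

From HB Require Import structures.
From mathcomp Require Import all_boot all_order all_algebra.
From mathcomp Require Import all_classical all_reals all_analysis.
Set Implicit Arguments. Unset Strict Implicit. Unset Printing Implicit Defensive.
Import Order.TTheory GRing.Theory Num.Theory.
Import numFieldNormedType.Exports.
Local Open Scope classical_set_scope.
Local Open Scope ring_scope.

Section Defs.
Variable R : realType.

(* Vectors of R^Y, with Y indexed by 'I_m, are row vectors 'rV[R]_m. *)

Definition dotv m (u v : 'rV[R]_m) : R := \sum_(j < m) u ord0 j * v ord0 j.
Definition enorm m (v : 'rV[R]_m) : R := Num.sqrt (dotv v v).

Definition Delta m : set 'rV[R]_m :=
  [set q | (forall j, 0 <= q ord0 j) /\ \sum_(j < m) q ord0 j = 1].
Definition H_Delta m : set 'rV[R]_m := [set q | \sum_(j < m) q ord0 j = 1].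
Definition L_Delta m : set 'rV[R]_m := [set v | \sum_(j < m) v ord0 j = 0].

Definition ind_set m (A : set 'rV[R]_m) (x : 'rV[R]_m) : \bar R :=
  if pselect (A x) then 0%E else +oo%E.

Definition dom m (f : 'rV[R]_m -> \bar R) : set 'rV[R]_m := [set x | (f x < +oo)%E].

Definition proper_fun m (f : 'rV[R]_m -> \bar R) :=
  (exists x, (f x < +oo)%E) /\ (forall x, (-oo < f x)%E).

Definition lsc_fun m (f : 'rV[R]_m -> \bar R) :=
  forall a : R, closed [set x | (f x <= a%:E)%E].

Definition convex_fun m (f : 'rV[R]_m -> \bar R) :=
  forall (x y : 'rV[R]_m) (t : R), (f x < +oo)%E -> (f y < +oo)%E -> 0 <= t <= 1 ->
    (f (t *: x + (1 - t) *: y)%R <= t%:E * f x + (1 - t)%R%:E * f y)%E.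

Definition rint m (H S : set 'rV[R]_m) : set 'rV[R]_m :=
  [set x | S x /\ H x /\ exists2 e : R, 0 < e &
     forall z, H z -> enorm (z - x) < e -> S z].

(* g (in the direction space L) is the gradient at x of the restriction of f
   to the affine subspace x + L, w.r.t. the induced Euclidean metric *)
Definition rel_grad m (L : set 'rV[R]_m) (f : 'rV[R]_m -> \bar R) (x g : 'rV[R]_m) :=
  L g /\ f x \is a fin_num /\
  forall e : R, 0 < e -> exists2 d : R, 0 < d & forall v, L v -> enorm v < d ->
    f (x + v) \is a fin_num /\
    `| fine (f (x + v)) - fine (f x) - dotv g v | <= e * enorm v.

(* Legendre-type for the restriction of f to the affine subspace H, whose
   direction space is L.  For H = L = setT this is the usual notion on R^m. *)
Definition legendre_on m (H L : set 'rV[R]_m) (f : 'rV[R]_m -> \bar R) :=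
  let I := rint H (dom f) in
  (forall (x y : 'rV[R]_m) (t : R), I x -> I y -> x != y -> 0 < t < 1 ->
     (f (t *: x + (1 - t) *: y)%R < t%:E * f x + (1 - t)%R%:E * f y)%E) /\
  (I !=set0) /\
  (forall x, I x -> exists g, rel_grad L f x g) /\
  (forall (u G : nat -> 'rV[R]_m) (b : 'rV[R]_m),
     (forall k, I (u k)) -> (forall k, rel_grad L f (u k) (G k)) ->
     u @ \oo --> b -> ~ I b ->
     forall M : R, exists K : nat, forall k, (K <= k)%N -> M < enorm (G k)).

Definition legendre m (f : 'rV[R]_m -> \bar R) := legendre_on setT setT f.

Definition Delta_ot N m : set ('I_N -> 'rV[R]_m) := [set q | forall i, @Delta m (q i)].
Definition Sbar_ot N m : set ('I_N -> 'rV[R]_m) := [set s | forall i j, s i = s j].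

Definition jensen_gap N m (Psi : 'rV[R]_m -> \bar R) (q : 'I_N -> 'rV[R]_m) : \bar R :=
  ((N%:R^-1)%:E * (\sum_(i < N) Psi (q i)) - Psi (N%:R^-1 *: \sum_(i < N) q i)%R)%E.

Definition convex_on_Delta_ot N m (J : ('I_N -> 'rV[R]_m) -> \bar R) :=
  forall (q q' : 'I_N -> 'rV[R]_m) (t : R), @Delta_ot N m q -> @Delta_ot N m q' ->
    0 <= t <= 1 ->
    (J (fun i => (t *: q i + (1 - t) *: q' i)%R) <= t%:E * J q + (1 - t)%R%:E * J q')%E.

Definition fconj m (Om : 'rV[R]_m -> \bar R) (s : 'rV[R]_m) : \bar R :=
  ereal_sup [set ((dotv s q)%:E - Om q)%E | q in [set: 'rV[R]_m]].

Definition FY m (Om : 'rV[R]_m -> \bar R) (s q : 'rV[R]_m) : \bar R :=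
  (Om q + fconj Om s - (dotv s q)%:E)%E.

Definition Sfun m (Om : 'rV[R]_m -> \bar R) (kappa : R) (gam s q : 'rV[R]_m) : \bar R :=
  ((dotv gam q)%:E + kappa%:E * FY Om s q)%E.

Definition SN N m (Om : 'rV[R]_m -> \bar R) (kappa : R) (gam : 'I_N -> 'rV[R]_m)
  (s q : 'I_N -> 'rV[R]_m) : \bar R :=
  ((N%:R^-1)%:E * \sum_(i < N) Sfun Om kappa (gam i) (s i) (q i))%E.

End Defs.

From HB Require Import structures.
From mathcomp Require Import all_boot all_order all_algebra.
From mathcomp Require Import all_classical all_reals all_analysis.
From mathcomp Require Import ring lra.
Import Order.TTheory GRing.Theory Num.Theory.
Import numFieldNormedType.Exports.
Local Open Scope classical_set_scope.
Local Open Scope ring_scope.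
Set Implicit Arguments. Unset Strict Implicit. Unset Printing Implicit Defensive.

(* Write [S_N(s, q) = Phi q + kappa * FY(s; avg q)], where [avg q] is
   the mean of the [q_i], FY is the Fenchel-Young loss of [Om] and [Phi] is the
   linear cost plus [kappa] times the Jensen gap, hence convex on the product
   simplex.  Essential smoothness puts every [q]-step minimiser in the relative
   interior of the simplex, so a gradient of [Om] at [avg q_(t+1)] makes FY
   vanish there and so does the optimal [s_(t+1)].  First-order optimality of
   the [q]-step then gives the three-point inequality
     S_N(s_(t+1), q_(t+1)) + kappa FY(s_(t+1); avg q') <= S_N(s_t, q')
   for every [q'].  The values [S_N(s_t, q_t)] decrease, so telescoping gives
   [t (S_N(s_t, q_t) - Phi q') <= kappa FY(s_0; avg q')], and the right-hand
   side is bounded uniformly in [q'] because a convex function on the simplex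
   is bounded by its values at the vertices. *)

Section Dot.
Variables (R : realType) (m : nat).
Implicit Types u v w : 'rV[R]_m.

Lemma dotvC u v : dotv u v = dotv v u.
Proof. by apply: eq_bigr => j _; rewrite mulrC. Qed.

Lemma dotvDr u v w : dotv u (v + w) = dotv u v + dotv u w.
Proof. by rewrite /dotv -big_split; apply: eq_bigr => j _; rewrite mxE mulrDr. Qed.

Lemma dotvZr a u v : dotv u (a *: v) = a * dotv u v.
Proof. by rewrite /dotv mulr_sumr; apply: eq_bigr => j _; rewrite mxE mulrCA. Qed.

Lemma dotvBr u v w : dotv u (v - w) = dotv u v - dotv u w.
Proof. by rewrite dotvDr -scaleN1r dotvZr mulN1r. Qed.

Lemma dotvZl a u v : dotv (a *: v) u = a * dotv v u.
Proof. by rewrite dotvC dotvZr dotvC. Qed.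

Lemma dotvBl u v w : dotv (v - w) u = dotv v u - dotv w u.
Proof. by rewrite dotvC dotvBr !(dotvC u). Qed.

Lemma dotv_sumr n u (f : 'I_n -> 'rV[R]_m) :
  dotv u (\sum_(i < n) f i) = \sum_(i < n) dotv u (f i).
Proof.
rewrite /dotv exchange_big; apply: eq_bigr => j _.
by rewrite summxE mulr_sumr.
Qed.

Lemma dotv_ge0 u : 0 <= dotv u u.
Proof. by apply: sumr_ge0 => j _; rewrite -expr2 sqr_ge0. Qed.

Lemma enorm_ge0 u : 0 <= enorm u.
Proof. exact: sqrtr_ge0. Qed.

Lemma enormZ a u : enorm (a *: u) = `|a| * enorm u.
Proof.
rewrite /enorm dotvZr dotvZl mulrA -expr2 sqrtrM ?sqr_ge0 //.
by rewrite sqrtr_sqr.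
Qed.

Lemma norm_coord_le_enorm u j : `|u ord0 j| <= enorm u.
Proof.
rewrite /enorm -(sqrtr_sqr (u ord0 j)) ler_sqrt ?dotv_ge0 //.
rewrite /dotv (bigD1 j) //= -expr2 lerDl.
by apply: sumr_ge0 => k _; rewrite -expr2 sqr_ge0.
Qed.

Lemma dotv_delta_mx u j : dotv u (delta_mx ord0 j) = u ord0 j.
Proof.
rewrite /dotv (bigD1 j) //= big1 => [|k kj]; first by rewrite mxE !eqxx mulr1 addr0.
by rewrite mxE (negbTE kj) andbF mulr0.
Qed.

End Dot.

Section Simplex.
Variables (R : realType) (m : nat).
Implicit Types (p u v w : 'rV[R]_m).
Local Notation ri := (rint (@H_Delta R m) (@Delta R m)).

Lemma Delta_le1 p j : Delta p -> p ord0 j <= 1.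
Proof.
move=> [p0 p1]; rewrite -p1 (bigD1 j) //= lerDl.
exact: sumr_ge0.
Qed.

Lemma norm_dotv_Delta_le u p : Delta p -> `|dotv u p| <= \sum_j `|u ord0 j|.
Proof.
move=> Dp; apply: (le_trans (ler_norm_sum _ _ _)).
apply: ler_sum => j _; rewrite normrM -[leRHS]mulr1 ler_wpM2l //.
by rewrite ger0_norm ?(Dp.1 j) // Delta_le1.
Qed.

Lemma Delta_conv p1 p2 t : Delta p1 -> Delta p2 -> 0 <= t <= 1 ->
  Delta (t *: p1 + (1 - t) *: p2).
Proof.
move=> [a1 b1] [a2 b2] /andP[t0 t1]; split.
  by move=> j; rewrite !mxE addr_ge0 ?mulr_ge0 ?subr_ge0.
under eq_bigr => j _ do rewrite !mxE.
by rewrite big_split /= -!mulr_sumr b1 b2 !mulr1 addrC subrK.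
Qed.

Lemma Delta_delta_mx j : Delta (delta_mx ord0 j : 'rV[R]_m).
Proof.
split=> [k|]; first by rewrite mxE ler0n.
rewrite (bigD1 j) //= big1 => [|k kj]; first by rewrite mxE !eqxx addr0.
by rewrite mxE (negbTE kj) andbF.
Qed.

Lemma Delta_dim_gt0 p : Delta p -> (0 < m)%N.
Proof.
case: m p => // p [_]; rewrite big_ord0 => /eqP.
by rewrite eq_sym oner_eq0.
Qed.

Lemma L_DeltaB p1 p2 : H_Delta p1 -> H_Delta p2 -> L_Delta (p1 - p2).
Proof.
rewrite /H_Delta /L_Delta /= => h1 h2.
by under eq_bigr => j _ do rewrite !mxE; rewrite sumrB h1 h2 subrr.
Qed.

Lemma H_DeltaD p v : H_Delta p -> L_Delta v -> H_Delta (p + v).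
Proof.
rewrite /H_Delta /L_Delta /= => h1 h2.
by under eq_bigr => j _ do rewrite !mxE; rewrite big_split /= h1 h2 addr0.
Qed.

Lemma L_DeltaZ a v : L_Delta v -> L_Delta (a *: v).
Proof.
rewrite /L_Delta /= => h.
by under eq_bigr => j _ do rewrite !mxE; rewrite -mulr_sumr h mulr0.
Qed.

Lemma dotv_const_mx (g : 'rV[R]_m) a : L_Delta g -> dotv g (const_mx a) = 0.
Proof.
rewrite /L_Delta /dotv /= => h.
by under eq_bigr => j _ do rewrite mxE; rewrite -mulr_suml h mul0r.
Qed.

Lemma L_Delta_dotv_le (g : 'rV[R]_m) K :
  L_Delta g -> 0 <= K -> (forall j, g ord0 j <= K) ->
  dotv g g <= m%:R * (m%:R * K) ^+ 2.
Proof.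
move=> Lg K0 gK.
have sumK a : \sum_(i < m) a = m%:R * a by rewrite sumr_const card_ord mulr_natl.
have gmK j : `|g ord0 j| <= m%:R * K.
  have mK : K <= m%:R * K by rewrite ler_peMl // ler1n (leq_ltn_trans _ (ltn_ord j)).
  rewrite ler_norml (le_trans (gK j) mK) andbT.
  move: Lg; rewrite /L_Delta /= (bigD1 j) //= => /eqP; rewrite addr_eq0 => /eqP ->.
  rewrite lerN2 -sumK [leRHS](bigD1 j) //= ler_wpDl //.
  by apply: ler_sum => i _; exact: gK.
rewrite /dotv -sumK; apply: ler_sum => j _.
by rewrite -expr2 -real_normK ?num_real // lerXn2r ?nnegrE ?(le_trans _ (gmK j)).
Qed.

Lemma rint_Delta_gt0 p j : ri p -> 0 < p ord0 j.
Proof.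
move=> [Dp [Hp [e e0 he]]].
rewrite lt_neqAle (Dp.1 j) andbT; apply/negP => /eqP pj0.
set w := delta_mx ord0 j - p.
have Lw : L_Delta w by apply: L_DeltaB => //; exact: (Delta_delta_mx j).2.
set d := e / (enorm w + 1).
have d0 : 0 < d by rewrite divr_gt0 // ltr_wpDl ?enorm_ge0.
have : Delta (p + (- d) *: w).
  apply: he; first exact: H_DeltaD (L_DeltaZ _ Lw).
  rewrite addrC addKr enormZ normrN gtr0_norm // /d.
  by rewrite mulrAC ltr_pdivrMr ?ltr_wpDl ?enorm_ge0 // ltr_pM2l // ltrDl.
move=> [/(_ j)]; rewrite !mxE -pj0 add0r !eqxx subr0 mulr1 oppr_ge0.
by rewrite leNgt d0.
Qed.

Lemma gt0_rint_Delta p : H_Delta p -> (forall j, 0 < p ord0 j) -> ri p.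
Proof.
move=> Hp pos.
have Dp : Delta p by split => // j; exact: ltW.
have m0 := Delta_dim_gt0 Dp.
split=> //; split=> //.
set S := \sum_(j < m) (p ord0 j)^-1.
have pinv_le j : (p ord0 j)^-1 <= S.
  by rewrite /S (bigD1 j) //= lerDl sumr_ge0 // => k _; rewrite invr_ge0 ltW.
have S0 : 0 < S by apply: lt_le_trans (pinv_le (Ordinal m0)); rewrite invr_gt0.
have le_p j : S^-1 <= p ord0 j by rewrite -[leRHS]invrK lef_pV2 ?posrE ?invr_gt0.
exists S^-1; first by rewrite invr_gt0.
move=> z Hz nz; split=> // j.
have := norm_coord_le_enorm (z - p) j; rewrite !mxE => hj.
have : `|z ord0 j - p ord0 j| < p ord0 j.
  by apply: (le_lt_trans hj); apply: (lt_le_trans nz).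
by rewrite ltr_norml => /andP[+ _]; rewrite ltrBrDr addNr => /ltW.
Qed.

Lemma rint_Delta_center : (0 < m)%N -> ri (const_mx m%:R^-1).
Proof.
move=> m0; apply: gt0_rint_Delta => [|j]; last by rewrite mxE invr_gt0 ltr0n.
rewrite /H_Delta /=; under eq_bigr => j _ do rewrite mxE.
by rewrite sumr_const card_ord -(mulr_natl (m%:R^-1) m) mulfV // pnatr_eq0 -lt0n.
Qed.

Lemma Delta_coord_eq1 p j : Delta p -> p ord0 j = 1 -> p = delta_mx ord0 j.
Proof.
move=> [p0 p1] pj1; apply/rowP => i; rewrite mxE eqxx /=.
have [->|ij] := eqVneq i j; first by rewrite pj1.
have rest0 : \sum_(k | k != j) p ord0 k = 0.
  move: p1; rewrite (bigD1 j) //= pj1 => /eqP.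
  by rewrite -subr_eq0 addrAC subrr add0r => /eqP.
by rewrite (psumr_eq0P (fun k _ => p0 k) rest0).
Qed.

Lemma Delta_peel p j : Delta p -> p ord0 j < 1 ->
  exists p', [/\ Delta p', p' ord0 j = 0, (forall i, p ord0 i = 0 -> p' ord0 i = 0)
    & p = p ord0 j *: delta_mx ord0 j + (1 - p ord0 j) *: p'].
Proof.
move=> [p0 p1] pj1; set t := p ord0 j.
have t1 : 0 < 1 - t by rewrite subr_gt0.
set p' := (1 - t)^-1 *: (p - t *: delta_mx ord0 j).
have p'E i : p' ord0 i = (1 - t)^-1 * (p ord0 i - t * (i == j)%:R).
  by rewrite !mxE eqxx.
exists p'; split.
- split=> [i|].
    rewrite p'E mulr_ge0 ?invr_ge0 ?(ltW t1) //.
    by have [->|_] := eqVneq i j; rewrite ?mulr1 ?subrr ?mulr0 ?subr0.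
  under eq_bigr => i _ do rewrite p'E.
  rewrite -mulr_sumr sumrB p1 -mulr_sumr (bigD1 j) //= eqxx big1 ?addr0 ?mulr1.
    by rewrite mulVf // gt_eqF.
  by move=> i /negbTE ->.
- by rewrite p'E eqxx mulr1 subrr mulr0.
- move=> i pi0; have [->|ij] := eqVneq i j; first by rewrite p'E eqxx mulr1 subrr mulr0.
  by rewrite p'E pi0 (negbTE ij) mulr0 subr0 mulr0.
- by rewrite /p' scalerA mulfV ?gt_eqF // scale1r addrC subrK.
Qed.

End Simplex.

Lemma sum_argmin_coord (T : Type) (R : numDomainType) n (A : set T)
    (F : 'I_n -> T -> R) (Q : 'I_n -> T) :
  (forall i, A (Q i)) ->
  (forall q, (forall i, A (q i)) -> \sum_i F i (Q i) <= \sum_i F i (q i)) ->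
  forall i p, A p -> F i (Q i) <= F i p.
Proof.
move=> AQ Qmin i p Ap.
set q := fun k => if k == i then p else Q k.
have := Qmin q; rewrite (bigD1 i) // [leRHS](bigD1 i) //= {2}/q eqxx.
have -> : \sum_(k | k != i) F k (q k) = \sum_(k | k != i) F k (Q k).
  by apply: eq_bigr => k /negbTE ki; rewrite /q ki.
by rewrite lerD2r; apply => k; rewrite /q; case: eqP.
Qed.

Lemma telescoping_rate (R : realFieldType) (h a : nat -> R) (phi : R) :
  (forall t, (0 < t)%N -> h t.+1 <= h t) ->
  (forall t, h t.+1 + a t.+1 <= phi + a t) -> (forall t, 0 <= a t) ->
  forall n, n%:R * (h n - phi) <= a 0%N.
Proof.
move=> h_mono h_step a_ge0 n.
suff : n%:R * (h n - phi) <= a 0%N - a n by have := a_ge0 n; lra.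
elim: n => [|n IH]; first by rewrite mul0r subrr.
have hn : n%:R * h n.+1 <= n%:R * h n.
  by case: n IH => [|n] _; rewrite ?mul0r // ler_wpM2l ?h_mono.
have := h_step n; rewrite -natr1; nra.
Qed.

Lemma exists_small_scale (R : realFieldType) (a d : R) : 0 <= a -> 0 < d ->
  exists l : R, [/\ 0 < l, l <= 1 & l * a < d].
Proof.
move=> a0 d0; have da : 0 < d + a by rewrite ltr_wpDr.
exists (d / (d + a)); split; first by rewrite divr_gt0.
  by rewrite ler_pdivrMr // mul1r lerDl.
by rewrite mulrAC ltr_pdivrMr // ltr_pM2l // ltrDr.
Qed.

Section LegendreOnSimplex.
Variables (R : realType) (m : nat) (Om : 'rV[R]_m -> \bar R).
Hypothesis Om_cvx : convex_fun Om.
Hypothesis Om_dom : dom Om = @Delta R m.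
Hypothesis Om_leg : legendre_on (@H_Delta R m) (@L_Delta R m) Om.
Hypothesis Om_gtNy : forall x, (-oo < Om x)%E.

Implicit Types (p u x z g s b w : 'rV[R]_m).
Local Notation ri := (rint (@H_Delta R m) (@Delta R m)).
Local Notation grad := (rel_grad (@L_Delta R m) Om).

Definition omr p : R := fine (Om p).

Lemma omrE p : Delta p -> Om p = (omr p)%:E.
Proof.
rewrite -Om_dom /dom /= => Dp.
by rewrite /omr fineK // fin_numElt Om_gtNy Dp.
Qed.

Lemma Om_out p : ~ Delta p -> Om p = +oo%E.
Proof.
move=> nD; apply/eqP/negPn/negP => h; apply: nD.
by rewrite -Om_dom /dom /= ltey.
Qed.

Lemma omr_conv x z t : Delta x -> Delta z -> 0 <= t <= 1 ->
  omr (t *: x + (1 - t) *: z) <= t * omr x + (1 - t) * omr z.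
Proof.
move=> Dx Dz t01; have := @Om_cvx x z t.
rewrite (omrE Dx) (omrE Dz) (omrE (Delta_conv Dx Dz t01)).
by move=> /(_ (ltry _) (ltry _) t01); rewrite -!EFinM -EFinD lee_fin.
Qed.

Lemma exists_rel_grad x : ri x -> exists g, grad x g.
Proof. by move: Om_leg; rewrite /legendre_on Om_dom => -[_ [_ [h _]]]; exact: h. Qed.

Lemma rel_grad_step u g w (r e : R) : grad u g -> L_Delta w -> 0 < r -> 0 < e ->
  exists l : R, [/\ 0 < l <= 1, l * enorm w < r &
    `|omr (u + l *: w) - omr u - l * dotv g w| <= l * e].
Proof.
move=> [_ [_ hg]] Lw r0 e0.
have w0 := enorm_ge0 w; have w1 : 0 < enorm w + 1 by rewrite ltr_wpDl.
have [d d0 hd] := hg (e / (enorm w + 1)) (divr_gt0 e0 w1).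
have dr0 : 0 < Num.min d r by rewrite lt_min d0 r0.
have [l [l0 l1 lw]] := exists_small_scale w0 dr0.
rewrite lt_min in lw; case/andP: lw => lwd lwr.
exists l; split => //; first by rewrite l0 l1.
have lwd' : enorm (l *: w) < d by rewrite enormZ (gtr0_norm l0).
have [_] := hd (l *: w) (L_DeltaZ l Lw) lwd'.
rewrite dotvZr enormZ (gtr0_norm l0) => /le_trans; apply.
rewrite mulrCA ler_pM2l // mulrAC ler_pdivrMr // ler_pM2l //.
by rewrite lerDl.
Qed.

Lemma rel_grad_ineq u g z : ri u -> grad u g -> Delta z ->
  omr u + dotv g (z - u) <= omr z.
Proof.
move=> Iu hg Dz; have Du := Iu.1.
have Lw : L_Delta (z - u) by apply: L_DeltaB; [exact: Dz.2 | exact: Du.2].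
rewrite addrC -lerBrDr; apply/ler_addgt0Pr => e e0.
have [l [/andP[l0 l1] _]] := rel_grad_step hg Lw ltr01 e0.
rewrite ler_norml => /andP[hl _].
have ul : u + l *: (z - u) = l *: z + (1 - l) *: u.
  by rewrite scalerBr scalerBl scale1r addrCA.
have l01 : 0 <= l <= 1 by rewrite ltW.
have := omr_conv Dz Du l01; rewrite -ul => cv.
rewrite -(ler_pM2l l0); nra.
Qed.

(* Minimality of [x] gives [<g, x> <= <b, x - c>] for the gradient [g] at a
   point [u] between [x] and the centre [c], which turns the gradient
   inequality towards the vertices into a bound independent of [u]. *)
Lemma rel_grad_coord_le x b (l : R) u g j :
  Delta x -> (forall p, Delta p -> omr x - dotv b x <= omr p - dotv b p) ->
  0 < l <= 1 -> u = x + l *: (const_mx m%:R^-1 - x) -> ri u -> grad u g ->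
  g ord0 j <= omr (delta_mx ord0 j) - omr x + dotv b (x - const_mx m%:R^-1).
Proof.
set c := const_mx _ => Dx xmin /andP[l0 l1] uE Iu gu.
have gc : dotv g c = 0 by exact: dotv_const_mx gu.1.
have gu_x : dotv g (x - u) = l * dotv g x.
  by rewrite uE dotvBr dotvDr dotvZr dotvBr gc; ring.
have gu_e : dotv g (delta_mx ord0 j - u) = g ord0 j - (1 - l) * dotv g x.
  by rewrite uE dotvBr dotv_delta_mx dotvDr dotvZr dotvBr gc; ring.
have bu : dotv b u = dotv b x + l * (dotv b c - dotv b x).
  by rewrite uE dotvDr dotvZr dotvBr.
have to_x := rel_grad_ineq Iu gu Dx.
have to_e := rel_grad_ineq Iu gu (Delta_delta_mx R j).
have := xmin u Iu.1; rewrite bu dotvBr => minx.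
rewrite gu_x in to_x; rewrite gu_e in to_e.
have gx : dotv g x <= dotv b x - dotv b c.
  by rewrite -(ler_pM2l l0); lra.
have : (1 - l) * dotv g x <= (1 - l) * (dotv b x - dotv b c).
  by rewrite ler_wpM2l // subr_ge0.
nra.
Qed.

(* Were [x] on the relative boundary, the gradients at the points [u k]
   approaching [x] from the centre would blow up, against [rel_grad_coord_le]. *)
Lemma argmin_rint x b : Delta x ->
  (forall p, Delta p -> omr x - dotv b x <= omr p - dotv b p) -> ri x.
Proof.
move=> Dx xmin; have m0 := Delta_dim_gt0 Dx.
apply: contrapT => nIx.
set c : 'rV[R]_m := const_mx m%:R^-1.
have Ic := rint_Delta_center R m0.
set u := fun k : nat => x + harmonic k *: (c - x).
have hl k : 0 < (harmonic k : R) <= 1.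
  by rewrite harmonic_gt0 /harmonic /= invf_le1 ?ltr0n // ler1n.
have Iu k : ri (u k).
  apply: gt0_rint_Delta => [|j].
    exact: H_DeltaD Dx.2 (L_DeltaZ _ (L_DeltaB Ic.2.1 Dx.2)).
  rewrite /u !mxE; have /andP[l0 l1] := hl k.
  have cj : 0 < m%:R^-1 :> R by rewrite invr_gt0 ltr0n.
  have xj := Dx.1 j.
  nra.
have [G hG] := choice (fun k => exists_rel_grad (Iu k)).
have cvu : u @ \oo --> x.
  have h := cvgD (cvg_cst x) (cvgZr_tmp (a := c - x) (@cvg_harmonic R)).
  by rewrite scale0r addr0 in h; exact: h.
set K := \sum_j `|omr (delta_mx ord0 j) - omr x + dotv b (x - c)|.
have K0 : 0 <= K by rewrite sumr_ge0.
have Gbound k : dotv (G k) (G k) <= m%:R * (m%:R * K) ^+ 2.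
  apply: L_Delta_dotv_le (hG k).1 K0 _ => j.
  apply: le_trans (rel_grad_coord_le j Dx xmin (hl k) erefl (Iu k) (hG k)) _.
  by rewrite /K (bigD1 j) //= (le_trans (ler_norm _)) // lerDl sumr_ge0.
have [_ [_ [_ blow]]] := Om_leg; rewrite Om_dom in blow.
have [k0 hk0] := blow u G x Iu hG cvu nIx (Num.sqrt (m%:R * (m%:R * K) ^+ 2)).
have := hk0 k0 (leqnn _); rewrite /enorm => h.
move: (h); rewrite ltr_sqrt ?ltNge ?Gbound //.
by rewrite -ltNge -sqrtr_gt0 (le_lt_trans (sqrtr_ge0 _) h).
Qed.

Lemma rel_grad_argmin p0 s g : ri p0 ->
  (forall p, Delta p -> omr p0 - dotv s p0 <= omr p - dotv s p) -> grad p0 g ->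
  forall w, L_Delta w -> dotv g w = dotv s w.
Proof.
move=> Ip0 p0min gp0.
have le_sg w : L_Delta w -> dotv s w <= dotv g w.
  move=> Lw; apply/ler_addgt0Pr => e e0.
  have [_ [_ [r r0 ball]]] := Ip0.
  have [l [/andP[l0 _] lr hl]] := rel_grad_step gp0 Lw r0 e0.
  have Dl : Delta (p0 + l *: w).
    apply: ball; first exact: H_DeltaD Ip0.2.1 (L_DeltaZ l Lw).
    by rewrite addrC addKr enormZ gtr0_norm.
  have := p0min _ Dl; rewrite dotvDr dotvZr => hmin.
  move: hl; rewrite ler_norml => /andP[_ hl].
  rewrite -(ler_pM2l l0); nra.
move=> w Lw; apply/eqP; rewrite eq_le le_sg //.
by have := le_sg _ (L_DeltaZ (-1) Lw); rewrite !dotvZr !mulN1r lerN2 andbT.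
Qed.

Lemma omr_dir_deriv_le p0 s w (e : R) : ri p0 ->
  (forall p, Delta p -> omr p0 - dotv s p0 <= omr p - dotv s p) -> L_Delta w -> 0 < e ->
  exists l : R, 0 < l <= 1 /\ omr (p0 + l *: w) - omr p0 - l * dotv s w <= l * e.
Proof.
move=> Ip0 p0min Lw e0.
have [g gp0] := exists_rel_grad Ip0.
have [l [l01 _ hl]] := rel_grad_step gp0 Lw ltr01 e0.
exists l; split => //.
by rewrite -(rel_grad_argmin Ip0 p0min gp0 Lw); exact: le_trans (ler_norm _) hl.
Qed.

(* Induction on the support of [p]: [Delta_peel] writes [p] as a convex
   combination of a vertex and a point of smaller support. *)
Lemma omr_ub : exists M, forall p, Delta p -> omr p <= M.
Proof.
set M := \sum_j `|omr (delta_mx ord0 j)|; exists M.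
have vertex j : omr (delta_mx ord0 j) <= M.
  by rewrite /M (bigD1 j) //= (le_trans (ler_norm _)) // lerDl sumr_ge0.
suff supp k p : Delta p -> (forall j : 'I_m, (k <= j)%N -> p ord0 j = 0) -> omr p <= M.
  by move=> p Dp; apply: (supp m) => // j; rewrite leqNgt ltn_ord.
elim: k p => [|k IH] p Dp pk.
  by move: Dp.2; rewrite big1 => [/eqP|j _]; [rewrite eq_sym oner_eq0 | exact: pk].
have [km|mk] := ltnP k m; last first.
  by apply: IH => // j kj; move: (ltn_ord j); rewrite ltnNge (leq_trans mk kj).
set j := Ordinal km.
have [pj1|pj1] := eqVneq (p ord0 j) 1; first by rewrite (Delta_coord_eq1 Dp pj1).
have [|p' [Dp' p'j p'0 pE]] := Delta_peel Dp (j := j).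
  by rewrite lt_neqAle pj1 Delta_le1.
have p'k (i : 'I_m) : (k <= i)%N -> p' ord0 i = 0.
  move=> ki; have [->|ij] := eqVneq i j; first exact: p'j.
  apply/p'0/pk; rewrite ltn_neqAle ki andbT; apply: contra ij => /eqP ki'.
  by apply/eqP/val_inj; rewrite /= ki'.
have t01 : 0 <= p ord0 j <= 1 by rewrite Dp.1 Delta_le1.
rewrite pE; apply: le_trans (omr_conv (Delta_delta_mx R j) Dp' t01) _.
have := IH p' Dp' p'k; have := vertex j; move: t01 => /andP[t0 t1]; nra.
Qed.

Hypothesis m_gt0 : (0 < m)%N.

Definition omc s : R := fine (fconj Om s).

Lemma fconj_ge s p : Delta p -> ((dotv s p - omr p)%:E <= fconj Om s)%E.
Proof. by move=> Dp; apply: ereal_sup_ubound; exists p => //; rewrite (omrE Dp). Qed.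

Lemma fconj_fin s : fconj Om s \is a fin_num.
Proof.
set c : 'rV[R]_m := const_mx m%:R^-1.
have Ic := rint_Delta_center R m_gt0.
have [g0 hg0] := exists_rel_grad Ic.
rewrite fin_numElt (lt_le_trans (ltNyr _) (fconj_ge s Ic.1)) /=.
apply: (@le_lt_trans _ _ (\sum_j `|(s - g0) ord0 j| - omr c + dotv g0 c)%:E
  _ _ _ (ltry _)).
apply: ge_ereal_sup => _ [p _ <-].
have [Dp|Dp] := pselect (Delta p); last by rewrite (Om_out Dp) /= leNye.
rewrite (omrE Dp) -EFinB lee_fin.
have := rel_grad_ineq Ic hg0 Dp; rewrite dotvBr.
have := norm_dotv_Delta_le (s - g0) Dp; rewrite dotvBl => /ler_normlW.
lra.
Qed.

Lemma fconjE s : fconj Om s = (omc s)%:E.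
Proof. by rewrite /omc fineK // fconj_fin. Qed.

Lemma omc_ge s p : Delta p -> dotv s p - omr p <= omc s.
Proof. by move=> Dp; rewrite -lee_fin -fconjE; exact: fconj_ge. Qed.

Lemma omc_rel_grad u g : ri u -> grad u g -> omc g = dotv g u - omr u.
Proof.
move=> Iu gu; apply/eqP; rewrite eq_le (omc_ge g Iu.1) andbT.
rewrite -lee_fin -fconjE; apply: ge_ereal_sup => _ [p _ <-].
have [Dp|Dp] := pselect (Delta p); last by rewrite (Om_out Dp) /= leNye.
rewrite (omrE Dp) -EFinB lee_fin.
have := rel_grad_ineq Iu gu Dp; rewrite dotvBr; lra.
Qed.

Section AlternatingMinimization.
Variables (N : nat) (kappa : R) (gam : 'I_N -> 'rV[R]_m) (Psi : 'rV[R]_m -> \bar R).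
Hypothesis N_gt0 : (0 < N)%N.
Hypothesis kappa_gt0 : 0 < kappa.
Hypothesis Om_Psi : forall p, Om p = (Psi p + ind_set (@Delta R m) p)%E.
Hypothesis Psi_jensen : convex_on_Delta_ot (@jensen_gap R N m Psi).

Implicit Types (q Q : 'I_N -> 'rV[R]_m).

Definition avg q : 'rV[R]_m := N%:R^-1 *: \sum_i q i.
Definition fyr s p := omr p + omc s - dotv s p.
Definition SNr s q := N%:R^-1 * \sum_i (dotv (gam i) (q i) + kappa * fyr s (q i)).
Definition jgap q := N%:R^-1 * \sum_i omr (q i) - omr (avg q).
(* [Phi q] is the minimum over [s] of [SNr s q], attained at the gradients of
   [Om] at [avg q] (see [SNr_decomp] and [fyr_rel_grad]). *)
Definition Phi q := N%:R^-1 * \sum_i dotv (gam i) (q i) + kappa * jgap q.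
Definition mix_ot (l : R) q Q i := l *: q i + (1 - l) *: Q i.

Lemma N_neq0 : N%:R != 0 :> R.
Proof. by rewrite pnatr_eq0 -lt0n. Qed.

Lemma avg_Delta q : Delta_ot q -> Delta (avg q).
Proof.
move=> Dq; split=> [j|].
  rewrite !mxE summxE mulr_ge0 ?invr_ge0 ?ler0n ?sumr_ge0 // => i _.
  exact: (Dq i).1.
under eq_bigr => j _ do rewrite !mxE summxE.
rewrite -mulr_sumr exchange_big /=.
under eq_bigr => i _ do rewrite (Dq i).2.
by rewrite sumr_const card_ord mulVf // N_neq0.
Qed.

Lemma avg_mix l q Q : avg (mix_ot l q Q) = avg Q + l *: (avg q - avg Q).
Proof.
apply/rowP => j; rewrite !mxE !summxE.
under eq_bigr => i _ do rewrite !mxE.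
by rewrite big_split /= -!mulr_sumr; ring.
Qed.

Lemma Delta_ot_mix l q Q : Delta_ot q -> Delta_ot Q -> 0 <= l <= 1 ->
  Delta_ot (mix_ot l q Q).
Proof. by move=> Dq DQ l01 i; apply: Delta_conv. Qed.

Lemma SNr_decomp s q : SNr s q = Phi q + kappa * fyr s (avg q).
Proof.
rewrite /SNr /Phi /jgap /fyr /avg dotvZr dotv_sumr big_split /= -mulr_sumr.
rewrite !big_split /= sumrN sumr_const card_ord -(mulr_natl (omc s) N).
by move: N_neq0; move: (N%:R : R) => n n0; field.
Qed.

Lemma fyr_ge0 s p : Delta p -> 0 <= fyr s p.
Proof. by move=> Dp; have := omc_ge s Dp; rewrite /fyr; lra. Qed.

Lemma fyr_rel_grad p g : ri p -> grad p g -> fyr g p = 0.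
Proof. by move=> Ip gp; rewrite /fyr (omc_rel_grad Ip gp); ring. Qed.

Lemma fyr_min s p0 : fyr s p0 = 0 ->
  forall p, Delta p -> omr p0 - dotv s p0 <= omr p - dotv s p.
Proof. by move=> f0 p Dp; have := fyr_ge0 s Dp; move: f0; rewrite /fyr; lra. Qed.

Lemma jensen_gapE q : Delta_ot q -> jensen_gap Psi q = (jgap q)%:E.
Proof.
have PsiE p : Delta p -> Psi p = (omr p)%:E.
  move=> Dp; rewrite -(omrE Dp) Om_Psi /ind_set.
  by case: (pselect (Delta p)) => [h /=|/(_ Dp)//]; rewrite adde0.
move=> Dq; rewrite /jensen_gap -/(avg q) (PsiE _ (avg_Delta Dq)).
under eq_bigr => i _ do rewrite (PsiE _ (Dq i)).
by rewrite sumEFin -EFinM -EFinB.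
Qed.

Lemma Phi_conv l q Q : Delta_ot q -> Delta_ot Q -> 0 <= l <= 1 ->
  Phi (mix_ot l q Q) <= l * Phi q + (1 - l) * Phi Q.
Proof.
move=> Dq DQ l01.
have := Psi_jensen Dq DQ l01; rewrite -/(mix_ot l q Q).
rewrite !jensen_gapE //; last exact: Delta_ot_mix.
rewrite -!EFinM -EFinD lee_fin => hJ.
have lin : N%:R^-1 * \sum_i dotv (gam i) (mix_ot l q Q i) =
    l * (N%:R^-1 * \sum_i dotv (gam i) (q i)) +
    (1 - l) * (N%:R^-1 * \sum_i dotv (gam i) (Q i)).
  rewrite /mix_ot; under eq_bigr => i _ do rewrite dotvDr !dotvZr.
  by rewrite big_split /= -!mulr_sumr; ring.
rewrite /Phi lin; have := ler_wpM2l (ltW kappa_gt0) hJ; lra.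
Qed.

Lemma SNr_argmin_rint s Q : Delta_ot Q ->
  (forall q, Delta_ot q -> SNr s Q <= SNr s q) -> forall i, ri (Q i).
Proof.
move=> DQ Qmin i.
set F := fun i p => dotv (gam i) p + kappa * fyr s p.
have FQmin q : Delta_ot q -> \sum_i F i (Q i) <= \sum_i F i (q i).
  by move=> Dq; have := Qmin q Dq; rewrite /SNr ler_pM2l // invr_gt0 ltr0n.
apply: (@argmin_rint (Q i) (s - kappa^-1 *: gam i) (DQ i)) => p Dp.
have := sum_argmin_coord DQ FQmin i Dp.
have Fb x : F i x = kappa * (omr x - dotv (s - kappa^-1 *: gam i) x) + kappa * omc s.
  by rewrite /F /fyr dotvBl dotvZl; field; rewrite gt_eqF.
by rewrite !Fb lerD2r ler_pM2l.
Qed.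

Lemma avg_rint Q : (forall i, ri (Q i)) -> ri (avg Q).
Proof.
move=> IQ; apply: gt0_rint_Delta => [|j].
  exact: (avg_Delta (fun i => (IQ i).1)).2.
rewrite !mxE summxE mulr_gt0 ?invr_gt0 ?ltr0n // (bigD1 (Ordinal N_gt0)) //=.
by rewrite ltr_wpDr ?rint_Delta_gt0 ?sumr_ge0 // => i _; exact: ((IQ i).1).1.
Qed.

Lemma fyr_argmin_zero s' Q : ri (avg Q) ->
  (forall u, SNr s' Q <= SNr u Q) -> fyr s' (avg Q) = 0.
Proof.
move=> IQ s'min; have [g gQ] := exists_rel_grad IQ.
apply/eqP; rewrite eq_le (fyr_ge0 s' IQ.1) andbT.
have := s'min g; rewrite !SNr_decomp (fyr_rel_grad IQ gQ) mulr0 addr0.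
by rewrite gerDl pmulr_rle0.
Qed.

(* [E q := SNr s q - kappa * fyr s' (avg q)] is convex in [q], and it is
   minimised at [Q] because [fyr s'] is stationary at its zero [avg Q]. *)
Lemma SNr_three_point s s' Q : Delta_ot Q ->
  (forall q, Delta_ot q -> SNr s Q <= SNr s q) -> (forall u, SNr s' Q <= SNr u Q) ->
  forall q, Delta_ot q -> SNr s' Q + kappa * fyr s' (avg q) <= SNr s q.
Proof.
move=> DQ Qmin s'min q Dq.
have IQ := avg_rint (SNr_argmin_rint DQ Qmin).
have W0 := fyr_argmin_zero IQ s'min.
set E := fun q => Phi q + kappa * (fyr s (avg q) - fyr s' (avg q)).
suff EQ_le : E Q <= E q.
  have := mulr_ge0 (ltW kappa_gt0) (fyr_ge0 s IQ.1).
  by move: EQ_le; rewrite /E !SNr_decomp W0; lra.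
apply/ler_addgt0Pr => e e0.
set w := avg q - avg Q.
have Lw : L_Delta w := L_DeltaB (avg_Delta Dq).2 (avg_Delta DQ).2.
have [l [/andP[l0 l1] hl]] :=
  omr_dir_deriv_le IQ (fyr_min W0) Lw (divr_gt0 e0 kappa_gt0).
have l01 : 0 <= l <= 1 by rewrite ltW.
have := Qmin _ (Delta_ot_mix Dq DQ l01); rewrite !SNr_decomp avg_mix -/w.
have := Phi_conv Dq DQ l01.
have := ler_wpM2l (ltW kappa_gt0) hl.
have -> : kappa * (l * (e / kappa)) = l * e by field; rewrite gt_eqF.
have dot_mix x : dotv x (avg Q + l *: w) =
    dotv x (avg Q) + l * (dotv x (avg q) - dotv x (avg Q)).
  by rewrite dotvDr dotvZr dotvBr.
move: W0; rewrite /E /fyr /w !dot_mix !dotvBr -/w => W0 hl' hc hQ.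
rewrite -(ler_pM2l l0); nra.
Qed.

Lemma SNr_rate (sg : nat -> 'rV[R]_m) (q : nat -> 'I_N -> 'rV[R]_m) :
  (forall t, Delta_ot (q t.+1) /\
     forall q', Delta_ot q' -> SNr (sg t) (q t.+1) <= SNr (sg t) q') ->
  (forall t u, SNr (sg t.+1) (q t.+1) <= SNr u (q t.+1)) ->
  exists C, forall t, (0 < t)%N -> forall q', Delta_ot q' ->
    SNr (sg t) (q t) <= Phi q' + C / t%:R.
Proof.
move=> qstep sstep; have [M hM] := omr_ub.
exists (kappa * (omc (sg 0%N) + \sum_j `|sg 0%N ord0 j| + M)) => t t0 q' Dq'.
have Dp := avg_Delta Dq'.
have three t' := SNr_three_point (qstep t').1 (qstep t').2 (sstep t').
have kfyr_ge0 t' p : Delta p -> 0 <= kappa * fyr (sg t') p.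
  by move=> Dp'; rewrite mulr_ge0 ?(ltW kappa_gt0) ?fyr_ge0.
have mono t' : (0 < t')%N -> SNr (sg t'.+1) (q t'.+1) <= SNr (sg t') (q t').
  case: t' => [//|t'] _; have := three t'.+1 _ (qstep t').1.
  by have := kfyr_ge0 t'.+2 _ (avg_Delta (qstep t').1); lra.
have step t' : SNr (sg t'.+1) (q t'.+1) + kappa * fyr (sg t'.+1) (avg q') <=
    Phi q' + kappa * fyr (sg t') (avg q').
  by have := three t' _ Dq'; rewrite [SNr (sg t') q']SNr_decomp.
have := telescoping_rate mono step (fun t' => kfyr_ge0 t' _ Dp) t.
have fyr0_le : fyr (sg 0%N) (avg q') <= omc (sg 0%N) + \sum_j `|sg 0%N ord0 j| + M.
  have := norm_dotv_Delta_le (sg 0%N) Dp; rewrite ler_norml => /andP[lo _].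
  by have := hM _ Dp; rewrite /fyr; lra.
have := ler_wpM2l (ltW kappa_gt0) fyr0_le.
rewrite -lerBlDl ler_pdivlMr ?ltr0n // mulrC; lra.
Qed.

Lemma Phi_le_SNr s q : Delta_ot q -> Phi q <= SNr s q.
Proof.
move=> Dq; rewrite SNr_decomp lerDl.
exact: mulr_ge0 (ltW kappa_gt0) (fyr_ge0 _ (avg_Delta Dq)).
Qed.

Lemma FY_E s p : Delta p -> FY Om s p = (fyr s p)%:E.
Proof. by move=> Dp; rewrite /FY (omrE Dp) fconjE. Qed.

Lemma SN_E sv q : Sbar_ot sv -> Delta_ot q ->
  SN Om kappa gam sv q = (SNr (sv (Ordinal N_gt0)) q)%:E.
Proof.
move=> Ssv Dq; rewrite /SN /SNr.
under eq_bigr => i _ do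
  rewrite /Sfun (Ssv i (Ordinal N_gt0)) (FY_E _ (Dq i)) -EFinM -EFinD.
by rewrite sumEFin -EFinM.
Qed.

Lemma SN_alternating_rate (s q : nat -> 'I_N -> 'rV[R]_m) :
  Sbar_ot (s 0%N) ->
  (forall t, Delta_ot (q t.+1) /\ forall q', Delta_ot q' ->
     (SN Om kappa gam (s t) (q t.+1) <= SN Om kappa gam (s t) q')%E) ->
  (forall t, Sbar_ot (s t.+1) /\ forall s' : 'I_N -> 'rV[R]_m, Sbar_ot s' ->
     (SN Om kappa gam (s t.+1) (q t.+1) <= SN Om kappa gam s' (q t.+1))%E) ->
  exists C : R, exists T : nat, forall t, (T < t)%N ->
    (SN Om kappa gam (s t) (q t)
     - ereal_inf [set SN Om kappa gam s' q' |
                    s' in @Sbar_ot R N m & q' in @Delta_ot R N m]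
     <= (C / t%:R)%:E)%E.
Proof.
move=> Ss0 qstep sstep; set i0 := Ordinal N_gt0.
have Ss t : Sbar_ot (s t) by case: t => [|t]; [exact: Ss0 | exact: (sstep t).1].
have [C rate] : exists C, forall t, (0 < t)%N -> forall q', Delta_ot q' ->
    SNr (s t i0) (q t) <= Phi q' + C / t%:R.
  apply: SNr_rate => [t|t u].
    have [Dq qmin] := qstep t; split=> // q' Dq'.
    by have := qmin q' Dq'; rewrite !SN_E // lee_fin.
  have [_ smin] := sstep t; have Dq := (qstep t).1.
  have Su : Sbar_ot (fun _ : 'I_N => u) by [].
  by have := smin _ Su; rewrite (SN_E (Ss t.+1) Dq) (SN_E Su Dq) lee_fin.
exists C, 0%N => t t0.
have Dqt : Delta_ot (q t) by case: t t0 => // t _; exact: (qstep t).1.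
rewrite SN_E // lee_subel_addr // -(subrKC (C / t%:R) (SNr _ _)) EFinD.
apply: leeD2l; apply: le_ereal_inf_tmp => _ [s' Ss' [q' Dq' <-]].
rewrite SN_E // lee_fin lerBlDl.
by have := rate t t0 q' Dq'; have := Phi_le_SNr (s' i0) Dq'; lra.
Qed.

End AlternatingMinimization.

End LegendreOnSimplex.

Unset Implicit Arguments.

Theorem theorem1 (R : realType) (d m N : nat)
  (y : 'I_m -> 'rV[R]_d)
  (Hy_inj : injective y)
  (Hy_ext : forall j : 'I_m, ~ exists lam : 'I_m -> R,
      (forall k, 0 <= lam k) /\ lam j = 0 /\ \sum_(k < m) lam k = 1 /\
      y j = \sum_(k < m) lam k *: y k)
  (kappa : R) (Hkappa : 0 < kappa)
  (Xi : Type) (xi : 'I_N -> Xi) (c : 'rV[R]_d -> Xi -> R)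
  (HN : (0 < N)%N)
  (Om Psi : 'rV[R]_m -> \bar R)
  (HOm_proper : proper_fun Om) (HOm_lsc : lsc_fun Om) (HOm_cvx : convex_fun Om)
  (HOm_dom : dom Om = @Delta R m)
  (HOm_leg : legendre_on (@H_Delta R m) (@L_Delta R m) Om)
  (HOm_Psi : forall q, Om q = (Psi q + ind_set (@Delta R m) q)%E)
  (HPsi_leg : legendre Psi)
  (Hjensen : convex_on_Delta_ot (@jensen_gap R N m Psi))
  (s : nat -> ('I_N -> 'rV[R]_m)) (q : nat -> ('I_N -> 'rV[R]_m)) :
  let gam : 'I_N -> 'rV[R]_m := fun i => \row_(j < m) c (y j) (xi i) in
  @Sbar_ot R N m (s 0%N) ->
  (forall t : nat,
     @Delta_ot R N m (q t.+1) /\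
     forall q' : 'I_N -> 'rV[R]_m, @Delta_ot R N m q' ->
       (SN Om kappa gam (s t) (q t.+1) <= SN Om kappa gam (s t) q')%E) ->
  (forall t : nat,
     @Sbar_ot R N m (s t.+1) /\
     forall s' : 'I_N -> 'rV[R]_m, @Sbar_ot R N m s' ->
       (SN Om kappa gam (s t.+1) (q t.+1) <= SN Om kappa gam s' (q t.+1))%E) ->
  exists C : R, exists T : nat, forall t : nat, (T < t)%N ->
    (SN Om kappa gam (s t) (q t)
     - ereal_inf [set SN Om kappa gam s' q' | s' in @Sbar_ot R N m & q' in @Delta_ot R N m]
     <= (C / t%:R)%:E)%E.
Proof.
move=> gam; have m_gt0 : (0 < m)%N.
  have [x Ox] := HOm_proper.1.
  by apply: (@Delta_dim_gt0 _ _ x); rewrite -HOm_dom.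
exact: (SN_alternating_rate HOm_cvx HOm_dom HOm_leg HOm_proper.2 m_gt0
  HN Hkappa HOm_Psi Hjensen).
Qed.
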